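(* Let $\nu\ge0$, $\epsilon\in\{0,1\}$ and let $\zeta$ be a real parameter with $1+\zeta\nu^2\neq0$. Then the equation $$-2\nu^2U_XU_{XX}+3\epsilon U_XU-\nu^2U_{XXX}U+\tfrac23U_{XXX}-\tfrac23\nu^{5/2}U_{XXX}+\epsilon U_T-\nu^2U_{XXT}=0\qquad(E_{\nu,\epsilon})$$ describes pseudo-spherical surfaces with associated one-forms $\omega^i=f_{i1}dX+f_{i2}dT$, where $f_{11}=\frac13\epsilon\zeta+\frac13\sqrt\nu\,\epsilon+\nu^2U_{XX}-\epsilon U+\frac{3}{4(1+\zeta\nu^2)}$, $f_{12}=\frac23(1-\nu^{5/2})U_{XX}+\frac\epsilon3(\zeta+\sqrt\nu)U+\epsilon U^2-\nu^2UU_{XX}-\frac29\epsilon(\zeta^2+2\sqrt\nu\zeta+\nu)-\frac{1}{2(1+\zeta\nu^2)}\big(\tfrac32U+\zeta+\sqrt\nu\big)$, $f_{21}=0$, $f_{22}=-U_X$, $f_{31}=-\frac13\epsilon\zeta-\frac13\sqrt\nu\,\epsilon-\nu^2U_{XX}+\epsilon U+\frac{3}{4(1+\zeta\nu^2)}$, $f_{32}=-\frac23(1-\nu^{5/2})U_{XX}-\frac\epsilon3(\zeta+\sqrt\nu)U-\epsilon U^2+\nu^2UU_{XX}+\frac29\epsilon(\zeta^2+2\sqrt\nu\zeta+\nu)-\frac{1}{2(1+\zeta\nu^2)}\big(\tfrac32U+\zeta+\sqrt\nu\big)$. That is, for every smooth solution $U$ the pulled-back forms satisfy $d\omega^1=\omega^3\wedge\omega^2$,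 $d\omega^2=\omega^1\wedge\omega^3$, $d\omega^3=\omega^1\wedge\omega^2$.
   Context: An equation describes pseudo-spherical surfaces if there are one-forms $\omega^i=f_{i1}dX+f_{i2}dT\neq0$ ($i=1,2,3$), with coefficients smooth functions of the independent variables, $U$ and finitely many derivatives of $U$, whose pullbacks by any solution satisfy the three structure equations $d\omega^1=\omega^3\wedge\omega^2$, $d\omega^2=\omega^1\wedge\omega^3$, $d\omega^3=\omega^1\wedge\omega^2$. *)

From Stdlib Require Import Reals List.
From Coquelicot Require Import Coquelicot.
Import ListNotations.
Open Scope R_scope.

Definition dX (f : R -> R -> R) : R -> R -> R :=
  fun x t => Derive (fun y => f y t) x.
Definition dT (f : R -> R -> R) : R -> R -> R :=
  fun x t => Derive (fun s => f x s) t.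

Inductive dir := DX | DT.

Fixpoint pd (l : list dir) (f : R -> R -> R) : R -> R -> R :=
  match l with
  | nil => f
  | DX :: l' => dX (pd l' f)
  | DT :: l' => dT (pd l' f)
  end.

Definition smooth2 (U : R -> R -> R) : Prop :=
  forall (l : list dir) (x t : R),
    ex_derive (fun y => pd l U y t) x /\
    ex_derive (fun s => pd l U x s) t /\
    continuous (fun p : R * R => pd l U (fst p) (snd p)) (x, t).

(* The equation E_{nu,eps}; nu^{5/2} = nu^2 * sqrt nu (nu >= 0). *)
Definition E_eq (nu eps : R) (U : R -> R -> R) (x t : R) : Prop :=
  let U0 := U x t in
  let UX := dX U x t in
  let UXX := dX (dX U) x t in
  let UXXX := dX (dX (dX U)) x t in
  let UT := dT U x t in
  let UXXT := dT (dX (dX U)) x t in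
  - 2 * nu ^ 2 * UX * UXX + 3 * eps * UX * U0 - nu ^ 2 * UXXX * U0
  + 2 / 3 * UXXX - 2 / 3 * (nu ^ 2 * sqrt nu) * UXXX
  + eps * UT - nu ^ 2 * UXXT = 0.

(* Coefficients f_ij as functions of the jet variables (u, u_X, u_XX). *)
Definition f11 (nu eps zeta : R) (u u1 u2 : R) : R :=
  1/3 * eps * zeta + 1/3 * sqrt nu * eps + nu ^ 2 * u2 - eps * u
  + 3 / (4 * (1 + zeta * nu ^ 2)).
Definition f12 (nu eps zeta : R) (u u1 u2 : R) : R :=
  2/3 * (1 - nu ^ 2 * sqrt nu) * u2 + eps / 3 * (zeta + sqrt nu) * u
  + eps * u ^ 2 - nu ^ 2 * u * u2
  - 2/9 * eps * (zeta ^ 2 + 2 * sqrt nu * zeta + nu)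
  - 1 / (2 * (1 + zeta * nu ^ 2)) * (3/2 * u + zeta + sqrt nu).
Definition f21 (nu eps zeta : R) (u u1 u2 : R) : R := 0.
Definition f22 (nu eps zeta : R) (u u1 u2 : R) : R := - u1.
Definition f31 (nu eps zeta : R) (u u1 u2 : R) : R :=
  - 1/3 * eps * zeta - 1/3 * sqrt nu * eps - nu ^ 2 * u2 + eps * u
  + 3 / (4 * (1 + zeta * nu ^ 2)).
Definition f32 (nu eps zeta : R) (u u1 u2 : R) : R :=
  - 2/3 * (1 - nu ^ 2 * sqrt nu) * u2 - eps / 3 * (zeta + sqrt nu) * u
  - eps * u ^ 2 + nu ^ 2 * u * u2
  + 2/9 * eps * (zeta ^ 2 + 2 * sqrt nu * zeta + nu)
  - 1 / (2 * (1 + zeta * nu ^ 2)) * (3/2 * u + zeta + sqrt nu).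

Definition jetfun := R -> R -> R -> R.

Definition pull (f : jetfun) (U : R -> R -> R) : R -> R -> R :=
  fun x t => f (U x t) (dX U x t) (dX (dX U) x t).

Definition form_nonzero (a b : jetfun) : Prop :=
  exists u u1 u2, a u u1 u2 <> 0 \/ b u u1 u2 <> 0.

(* d(a dX + b dT) = (b_X - a_T) dX^dT, pulled back by U. *)
Definition dform (a b : jetfun) (U : R -> R -> R) (x t : R) : R :=
  dX (pull b U) x t - dT (pull a U) x t.

(* (a dX + b dT) ^ (c dX + e dT) = (a e - b c) dX^dT, pulled back by U. *)
Definition wedge (a b c e : jetfun) (U : R -> R -> R) (x t : R) : R :=
  pull a U x t * pull e U x t - pull b U x t * pull c U x t.

Definition describes_pss (Eq : (R -> R -> R) -> R -> R -> Prop)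
    (a1 b1 a2 b2 a3 b3 : jetfun) : Prop :=
  form_nonzero a1 b1 /\ form_nonzero a2 b2 /\ form_nonzero a3 b3 /\
  forall U : R -> R -> R, smooth2 U -> (forall x t, Eq U x t) ->
    forall x t,
      dform a1 b1 U x t = wedge a3 b3 a2 b2 U x t /\
      dform a2 b2 U x t = wedge a1 b1 a3 b3 U x t /\
      dform a3 b3 U x t = wedge a1 b1 a2 b2 U x t.

(* The coefficients f_ij are polynomials in the jet variables (u, u_X, u_XX)
   of degree at most one in u_X and u_XX, so the exterior derivatives of the
   pulled-back forms follow from the chain rule along U.  The second structure
   equation is then an identity in the jet variables (it uses sqrt nu ^ 2 = nu),
   while d w1 - w3 ^ w2 and d w3 - w1 ^ w2 equal the left-hand side of E_{nu,eps}
   and its negative.  None of the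
   forms vanishes: f22 = - u_X, and at u = (zeta + sqrt nu)/3, u_XX = 0 both f11
   and f31 equal 3/(4(1 + zeta nu^2)). *)

From Stdlib Require Import Reals Lra.
From Coquelicot Require Import Coquelicot.
Open Scope R_scope.

Definition quad_jet (a0 a1 a2 a3 a4 a5 : R) : jetfun :=
  fun u u1 u2 => a0 + a1 * u + a2 * u ^ 2 + a3 * u1 + a4 * u2 + a5 * u * u2.

Section TotalDerivatives.

Variables (U : R -> R -> R) (x t : R).
Hypothesis hU : smooth2 U.
Variables (f : jetfun) (a0 a1 a2 a3 a4 a5 : R).
Hypothesis hf : forall u u1 u2, f u u1 u2 = quad_jet a0 a1 a2 a3 a4 a5 u u1 u2.

Lemma dX_pull_quad_jet :
  dX (pull f U) x t =
  a1 * dX U x t + 2 * a2 * U x t * dX U x t + a3 * dX (dX U) x t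
  + a4 * dX (dX (dX U)) x t
  + a5 * (dX U x t * dX (dX U) x t + U x t * dX (dX (dX U)) x t).
Proof.
destruct (hU nil x t) as [h0 _].
destruct (hU (cons DX nil) x t) as [h1 _].
destruct (hU (cons DX (cons DX nil)) x t) as [h2 _].
simpl in h0, h1, h2.
unfold dX at 1.
rewrite (Derive_ext _
  (fun y => quad_jet a0 a1 a2 a3 a4 a5 (U y t) (dX U y t) (dX (dX U) y t)))
  by (intros; apply hf).
unfold quad_jet.
erewrite is_derive_unique by (auto_derive; [tauto | reflexivity]).
unfold dX; ring.
Qed.

Lemma dT_pull_quad_jet :
  dT (pull f U) x t =
  a1 * dT U x t + 2 * a2 * U x t * dT U x t + a3 * dT (dX U) x t
  + a4 * dT (dX (dX U)) x t
  + a5 * (dT U x t * dX (dX U) x t + U x t * dT (dX (dX U)) x t).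
Proof.
destruct (hU nil x t) as [_ [h0 _]].
destruct (hU (cons DX nil) x t) as [_ [h1 _]].
destruct (hU (cons DX (cons DX nil)) x t) as [_ [h2 _]].
simpl in h0, h1, h2.
unfold dT at 1.
rewrite (Derive_ext _
  (fun s => quad_jet a0 a1 a2 a3 a4 a5 (U x s) (dX U x s) (dX (dX U) x s)))
  by (intros; apply hf).
unfold quad_jet.
erewrite is_derive_unique by (auto_derive; [tauto | reflexivity]).
unfold dT; ring.
Qed.

End TotalDerivatives.

Section Coefficients.

Variables (nu eps zeta : R).
Let s := sqrt nu.
Let k := 1 + zeta * nu ^ 2.

Lemma f11_quad_jet u u1 u2 :
  f11 nu eps zeta u u1 u2 =
  quad_jet (eps * (zeta + s) / 3 + 3 / (4 * k)) (- eps) 0 0 (nu ^ 2) 0 u u1 u2.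
Proof. unfold f11, quad_jet, s, k, Rdiv; ring. Qed.

Lemma f31_quad_jet u u1 u2 :
  f31 nu eps zeta u u1 u2 =
  quad_jet (- eps * (zeta + s) / 3 + 3 / (4 * k)) eps 0 0 (- nu ^ 2) 0 u u1 u2.
Proof. unfold f31, quad_jet, s, k, Rdiv; ring. Qed.

Lemma f12_quad_jet u u1 u2 :
  f12 nu eps zeta u u1 u2 =
  quad_jet (- 2 / 9 * eps * (zeta ^ 2 + 2 * s * zeta + nu) - 1 / (2 * k) * (zeta + s))
    (eps / 3 * (zeta + s) - 1 / (2 * k) * (3 / 2)) eps 0 (2 / 3 * (1 - nu ^ 2 * s))
    (- nu ^ 2) u u1 u2.
Proof. unfold f12, quad_jet, s, k, Rdiv; ring. Qed.

Lemma f32_quad_jet u u1 u2 :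
  f32 nu eps zeta u u1 u2 =
  quad_jet (2 / 9 * eps * (zeta ^ 2 + 2 * s * zeta + nu) - 1 / (2 * k) * (zeta + s))
    (- eps / 3 * (zeta + s) - 1 / (2 * k) * (3 / 2)) (- eps) 0
    (- 2 / 3 * (1 - nu ^ 2 * s)) (nu ^ 2) u u1 u2.
Proof. unfold f32, quad_jet, s, k, Rdiv; ring. Qed.

Lemma f21_quad_jet u u1 u2 : f21 nu eps zeta u u1 u2 = quad_jet 0 0 0 0 0 0 u u1 u2.
Proof. unfold f21, quad_jet; ring. Qed.

Lemma f22_quad_jet u u1 u2 : f22 nu eps zeta u u1 u2 = quad_jet 0 0 0 (- 1) 0 0 u u1 u2.
Proof. unfold f22, quad_jet; ring. Qed.

Lemma f11_balanced : f11 nu eps zeta ((zeta + s) / 3) 0 0 = 3 / (4 * k).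
Proof. unfold f11, s, k, Rdiv; ring. Qed.

Lemma f31_balanced : f31 nu eps zeta ((zeta + s) / 3) 0 0 = 3 / (4 * k).
Proof. unfold f31, s, k, Rdiv; ring. Qed.

Hypothesis hnu : 0 <= nu.
Hypothesis hk : k <> 0.

Lemma f11_f32_sub_f12_f31 u u1 u2 :
  f11 nu eps zeta u u1 u2 * f32 nu eps zeta u u1 u2
  - f12 nu eps zeta u u1 u2 * f31 nu eps zeta u u1 u2 = - u2.
Proof.
pose proof (sqrt_sqrt nu hnu) as hs.
unfold k in hk; unfold f11, f12, f31, f32.
revert hs hk; generalize (sqrt nu) as r; intros r hs hk; subst nu.
field; exact hk.
Qed.

End Coefficients.

Theorem corollary3 (nu eps zeta : R) (hnu : 0 <= nu) (heps : eps = 0 \/ eps = 1)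
    (hz : 1 + zeta * nu ^ 2 <> 0) :
  describes_pss (E_eq nu eps)
    (f11 nu eps zeta) (f12 nu eps zeta)
    (f21 nu eps zeta) (f22 nu eps zeta)
    (f31 nu eps zeta) (f32 nu eps zeta).
Proof.
assert (hc : 3 / (4 * (1 + zeta * nu ^ 2)) <> 0)
  by (apply Rmult_integral_contrapositive_currified;
      [lra | apply Rinv_neq_0_compat, Rmult_integral_contrapositive_currified; lra]).
split; [| split; [| split]].
- exists ((zeta + sqrt nu) / 3), 0, 0; left; rewrite f11_balanced; exact hc.
- exists 0, 1, 0; right; unfold f22; lra.
- exists ((zeta + sqrt nu) / 3), 0, 0; left; rewrite f31_balanced; exact hc.
- intros U hU hE x t.
  specialize (hE x t); unfold E_eq in hE; cbv zeta in hE.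
  unfold dform, wedge.
  rewrite (dX_pull_quad_jet U x t hU _ _ _ _ _ _ _ (f12_quad_jet nu eps zeta)),
    (dX_pull_quad_jet U x t hU _ _ _ _ _ _ _ (f22_quad_jet nu eps zeta)),
    (dX_pull_quad_jet U x t hU _ _ _ _ _ _ _ (f32_quad_jet nu eps zeta)),
    (dT_pull_quad_jet U x t hU _ _ _ _ _ _ _ (f11_quad_jet nu eps zeta)),
    (dT_pull_quad_jet U x t hU _ _ _ _ _ _ _ (f21_quad_jet nu eps zeta)),
    (dT_pull_quad_jet U x t hU _ _ _ _ _ _ _ (f31_quad_jet nu eps zeta)).
  unfold pull; rewrite f11_f32_sub_f12_f31 by assumption.
  split; [| split].
  + refine (Rminus_diag_uniq _ _ (eq_trans _ hE)).
    unfold f31, f32, f21, f22; field; exact hz.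
  + ring.
  + refine (eq_sym (Rminus_diag_uniq _ _ (eq_trans _ hE))).
    unfold f11, f12, f21, f22; field; exact hz.
Qed.
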